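(* Let $L,R,M\in\mathbb{N}$, let $\mathcal{X}$ be any set and $\Phi\subseteq\{0,1\}^{\mathcal{X}}$ any set of features closed under negation, and let $\mathcal{T}$ be the relaxed component model teacher class (defined in the context) for these parameters. Let $H=\{(x_0,0)\}$ for some $x_0\in\mathcal{X}$ such that $\mathcal{T}$ is consistent with $H$. Then $\mathrm{DFFdim}(\mathcal{T},H)\leq RM$.
   Context: Setting. $\mathcal{X}$ is a set of examples, $\mathcal{Y}$ a finite set of labels, and $\Phi$ a set of Boolean features $\phi:\mathcal{X}\to\{0,1\}$; $\bot$ denotes a null symbol not in $\mathcal{X}\cup\mathcal{Y}\cup\Phi$. A teacher over $\mathcal{X},\mathcal{Y},\Phi$ is a pair $T=(\ell,\psi)$ with $\ell:\mathcal{X}\to\mathcal{Y}$ and $\psi:\mathcal{X}\times\mathcal{X}\to\Phi\cup\{\bot\}$ such that whenever $\ell(x)\neq\ell(\hat x)$, $\phi:=\psi(x,\hat x)\in\Phi$, $\phi(x)=1$ and $\phi(\hat x)=0$. A teacher class is a set of teachers. A history is a non-empty set $H\subseteq\mathcal{X}\times\mathcal{Y}$; a teacher $(\ell,\psi)$ is consistent with $H$ if $\ell(x)=y$ for all $(x,y)\in H$; $\mathcal{T}_H$ is the set of teachers in $\mathcal{T}$ consistent with $H$, and $\mathcal{T}$ is consistent with $H$ if $\mathcal{T}_H\neq\emptyset$. DFF dimension. A DFF tree is a rooted tree whose nodes are triples $\langle y,\phi,x\rangle$ with $y\in\mathcal{Y}\cup\{\bot\}$, $\phi\in\Phi\cup\{\bot\}$,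 $x\in\mathcal{X}\cup\{\bot\}$, such that the root has $y=\phi=\bot$, a node has $x=\bot$ iff it is a leaf, every edge is labeled by a pair $(\hat x,\hat y)\in\mathcal{X}\times\mathcal{Y}$, and every non-root node $\langle y,\phi,x\rangle$ with incoming edge $(\hat x,\hat y)$ has $\phi\neq\bot$ whenever $y\neq\hat y$. For a parent–child pair $\langle\cdot,\cdot,x\rangle\xrightarrow{(\hat x,\hat y)}\langle y,\phi,\cdot\rangle$ on a path, $(x,y)$ is called a labeled example in that path. A path from the root is consistent with a teacher $(\ell,\psi)$ if for every such parent–child pair on it, $\ell(x)=y$ and, if $y\neq\hat y$, $\psi(x,\hat x)=\phi$. Given $\mathcal{T}$ consistent with $H$, a DFF tree is shattered by $\mathcal{T}$ and $H$ if: (1) every non-root node $\langle y,\phi,x\rangle$ with incoming edge $(\hat x,\hat y)$ has $y\neq\hat y$; (2) the labels of the outgoing edges of each non-leaf node $v$ are exactly the pairs that belong to $H$ or are labeled examples in the path from the root to $v$; (3) every root-to-leaf path is consistent with some teacher in $\mathcal{T}_H$; (4) all root-to-leaf paths have the same number of edges, called the height. $\mathrm{DFFdim}(\mathcal{T},H)$ is the maximal height of a DFF tree shattered by $\mathcal{T}$ and $H$. Relaxed component model. Let $\mathcal{Y}=\{0,1,\dots,L\}$. For $S\subseteq\Phi$ write $S(x)=\prod_{\phi\in S}\phi(x)$. For a collection $\mathcal{S}=\{S_1,\dots,S_R\}$ of (at most $R$) subsets of $\Phi$, each of size at most $M$, and $q:[R]\to[L]$, define $\ell_{\mathcal{S},q}(x)=q(j)$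 if $S_j(x)=1$, and $\ell_{\mathcal{S},q}(x)=0$ if no $j$ has $S_j(x)=1$; $\ell_{\mathcal{S},q}$ is defined only if for every $x$ all $j$ with $S_j(x)=1$ give the same $q(j)$. Let $\mathcal{L}$ be the set of pairs $(\mathcal{S},q)$ for which $\ell_{\mathcal{S},q}$ is defined. Let $F(x)=\{\phi\in\Phi:\phi(x)=1\}$ and $\neg A=\{\neg\phi:\phi\in A\}$. $\mathcal{T}_{\mathcal{S},q}$ is the set of all teachers $(\ell_{\mathcal{S},q},\psi)$ for which there is a map $x\mapsto S(x)\in\mathcal{S}$, defined on all $x$ with $\ell_{\mathcal{S},q}(x)\neq0$, with $S(x)=S_j$ for some $j$ satisfying $S_j(x)=1$ and $q(j)=\ell_{\mathcal{S},q}(x)$, such that for all $x,\hat x$ with $\ell_{\mathcal{S},q}(x)\neq\ell_{\mathcal{S},q}(\hat x)$: if $\ell_{\mathcal{S},q}(\hat x)\neq0$ then $\psi(x,\hat x)\in F(x)\cap\neg S(\hat x)$, and otherwise $\psi(x,\hat x)\in S(x)\cap\neg F(\hat x)$. The teacher class is $\mathcal{T}=\bigcup_{(\mathcal{S},q)\in\mathcal{L}}\mathcal{T}_{\mathcal{S},q}$. *)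

From Stdlib Require List.
From mathcomp Require Import all_boot.

Set Implicit Arguments.
Unset Strict Implicit.
Unset Printing Implicit Defensive.

(* The null symbol "bot" is modelled by [None] of an option type.     *)

Definition feature (X : Type) := X -> bool.

Definition negf (X : Type) (phi : feature X) : feature X := fun z => ~~ phi z.

Definition teacher (X Y : Type) := ((X -> Y) * (X -> X -> option (feature X)))%type.

Definition is_teacher (X Y : Type) (Phi : feature X -> Prop) (T : teacher X Y) :=
  forall x xh, T.1 x <> T.1 xh ->
    exists phi, T.2 x xh = Some phi /\ Phi phi /\ phi x = true /\ phi xh = false.

Definition consistent_with (X Y : Type) (T : teacher X Y) (H : X * Y -> Prop) :=
  forall x y, H (x, y) -> T.1 x = y.

Definition class_consistent (X Y : Type) (TC : teacher X Y -> Prop)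
    (H : X * Y -> Prop) :=
  exists T, TC T /\ consistent_with T H.

(* DFF trees: node <y, phi, x>, children with edge labels (xh, yh).     *)

Inductive dfftree (X Y F : Type) : Type :=
  DNode : option Y -> option F -> option X ->
          seq ((X * Y) * dfftree X Y F) -> dfftree X Y F.

Arguments DNode {X Y F}.

Definition node_y (X Y F : Type) (t : dfftree X Y F) : option Y :=
  let: DNode y _ _ _ := t in y.
Definition node_f (X Y F : Type) (t : dfftree X Y F) : option F :=
  let: DNode _ f _ _ := t in f.

(* the labelled example (x, y) contributed by the parent-child pair
   parent <_,_,x> --> child <y,_,_> *)
Definition new_example (X Y F : Type) (x : option X) (c : dfftree X Y F)
  : seq (X * Y) :=
  match x, node_y c with
  | Some x', Some y' => [:: (x', y')]
  | _, _ => [::]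
  end.

(* [dff_ok H E inc t]: the subtree t, whose incoming edge label is [inc]
   ([None] for the root) and such that E are the labelled examples on the
   path from the root to t, satisfies the DFF-tree axioms together with
   the shattering conditions (1) and (2). *)
Inductive dff_ok (X Y F : Type) (H : X * Y -> Prop)
  : seq (X * Y) -> option (X * Y) -> dfftree X Y F -> Prop :=
| dff_ok_node : forall E inc y f x ch,
    (x = None <-> ch = [::]) ->
    (match inc with
     | None => y = None /\ f = None
     | Some (xh, yh) => (y <> Some yh -> f <> None)
                        /\ y <> Some yh
     end) ->
    (ch <> [::] ->
      forall p, (exists c, List.In (p, c) ch) <-> (H p \/ List.In p E)) ->
    (forall p c, List.In (p, c) ch -> dff_ok H (E ++ new_example x c) (Some p) c) ->
    dff_ok H E inc (DNode y f x ch).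

(* a root-to-leaf path, recorded as the list of its parent-child pairs:
   (x of parent, edge label (xh,yh), y of child, phi of child) *)
Definition step (X Y F : Type) :=
  (option X * (X * Y) * option Y * option F)%type.

Inductive rl_path (X Y F : Type) : dfftree X Y F -> seq (step X Y F) -> Prop :=
| rl_leaf : forall y f x, rl_path (DNode y f x [::]) [::]
| rl_step : forall y f x ch p c s,
    List.In (p, c) ch -> rl_path c s ->
    rl_path (DNode y f x ch) ((x, p, node_y c, node_f c) :: s).

Definition step_consistent (X Y : Type) (T : teacher X Y)
    (st : step X Y (feature X)) : Prop :=
  let: (px, (xh, yh), y, f) := st in
  exists x, px = Some x /\ y = Some (T.1 x) /\ (y <> Some yh -> T.2 x xh = f).

Definition path_consistent (X Y : Type) (T : teacher X Y)
    (s : seq (step X Y (feature X))) : Prop :=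
  forall st, List.In st s -> step_consistent T st.

Definition has_height (X Y F : Type) (t : dfftree X Y F) (h : nat) : Prop :=
  forall s, rl_path t s -> size s = h.

Definition shattered (X Y : Type) (TC : teacher X Y -> Prop)
    (H : X * Y -> Prop) (t : dfftree X Y (feature X)) : Prop :=
  dff_ok H [::] None t /\
  (forall s, rl_path t s ->
     exists T, TC T /\ consistent_with T H /\ path_consistent T s) /\
  (exists h, has_height t h).

(* Relaxed component model, Y = {0,...,L} = 'I_L.+1,                    *)

Definition sat (X : Type) (s : seq (feature X)) (x : X) : bool :=
  all (fun phi => phi x) s.

Definition lSq (X : Type) (L R : nat) (S : 'I_R -> seq (feature X))
    (q : 'I_R -> 'I_L.+1) (x : X) : 'I_L.+1 :=
  if [pick j | sat (S j) x] is Some j then q j else ord0.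

Definition in_Lset (X : Type) (Phi : feature X -> Prop) (L R M : nat)
    (S : 'I_R -> seq (feature X)) (q : 'I_R -> 'I_L.+1) : Prop :=
  (forall j, size (S j) <= M /\ forall phi, List.In phi (S j) -> Phi phi) /\
  (forall j, 0 < q j) /\
  (forall x j j', sat (S j) x -> sat (S j') x -> q j = q j').

Definition in_TSq (X : Type) (Phi : feature X -> Prop) (L R : nat)
    (S : 'I_R -> seq (feature X)) (q : 'I_R -> 'I_L.+1)
    (T : teacher X 'I_L.+1) : Prop :=
  is_teacher Phi T /\
  (forall x, T.1 x = lSq S q x) /\
  exists Sx : X -> seq (feature X),
    (forall x, T.1 x <> ord0 ->
       exists j, Sx x = S j /\ sat (S j) x /\ q j = T.1 x) /\
    (forall x xh, T.1 x <> T.1 xh ->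
       (T.1 xh <> ord0 ->
          exists phi, T.2 x xh = Some phi /\
            (Phi phi /\ phi x = true) /\
            (exists phi', List.In phi' (Sx xh) /\ phi = negf phi')) /\
       (T.1 xh = ord0 ->
          exists phi, T.2 x xh = Some phi /\
            List.In phi (Sx x) /\
            (exists phi', (Phi phi' /\ phi' xh = true) /\ phi = negf phi'))).

Definition relaxed_class (X : Type) (Phi : feature X -> Prop) (L R M : nat)
    (T : teacher X 'I_L.+1) : Prop :=
  exists (S : 'I_R -> seq (feature X)) (q : 'I_R -> 'I_L.+1),
    in_Lset Phi M S q /\ in_TSq Phi S q T.
Arguments relaxed_class {X} Phi L R M T.

From Stdlib Require List FunctionalExtensionality.
From mathcomp Require Import all_boot zify.

Set Implicit Arguments.
Unset Strict Implicit.
Unset Printing Implicit Defensive.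

(* An adversary walks down a shattered tree, keeping a list of prototypes:
   labelled examples (x_i, y_i) met on the path, each with a set C_i of
   features already known to lie in the component S(x_i).  At a node with
   example x it follows the edge (x_i, y_i) of a prototype with C_i(x) = 1 if
   there is one; a consistent teacher must then answer with the negation of
   some phi in S(x_i) with phi(x) = 0, which is new to C_i.  Otherwise it
   follows the edge (x0, 0); the teacher answers with a feature of S(x), and
   S(x) is the component of no prototype, since x satisfies none of the C_i.
   Every edge thus teaches one more feature of one of at most R components of
   size at most M, so every path has at most R * M edges. *)

Lemma size_length (A : Type) (s : seq A) : size s = length s.
Proof. by elim: s => //= ? ? ->. Qed.

Lemma sumn_map_le (A : Type) (f : A -> nat) (m : nat) (s : seq A) :
  all (fun a => f a <= m) s -> sumn (map f s) <= size s * m.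
Proof. by elim: s => //= a s IH /andP[fa_le /IH]; rewrite mulSn; lia. Qed.

Lemma sumn_map_set_nth (A : Type) (f : A -> nat) (d : A) (s : seq A) i a :
  i < size s ->
  sumn (map f (set_nth d s i a)) + f (nth d s i) = sumn (map f s) + f a.
Proof. by elim: s i => [|b s IH] [|i] //= lt_i; [lia | rewrite -addnA IH //; lia]. Qed.

Lemma negfK (X : Type) : involutive (@negf X).
Proof.
by move=> phi; apply: FunctionalExtensionality.functional_extensionality => z;
  rewrite /negf negbK.
Qed.

Lemma satP (X : Type) (s : seq (feature X)) x :
  sat s x <-> (forall phi, List.In phi s -> phi x).
Proof.
elim: s => [|a s IH] /=; first by split.
rewrite /sat /=; split.
  by case/andP=> ax /IH sx phi [<-|/sx].
by move=> H; apply/andP; split; [apply: H; left | apply/IH => phi ?; apply: H; right].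
Qed.

Lemma sat_incl (X : Type) (C D : seq (feature X)) x :
  List.incl C D -> sat D x -> sat C x.
Proof. by move=> CD /satP Dx; apply/satP => phi /CD /Dx. Qed.

Lemma path_consistent_cons (X Y : Type) (T : teacher X Y) st s :
  path_consistent T (st :: s) -> step_consistent T st /\ path_consistent T s.
Proof. by move=> Ts; split=> [|st' ?]; apply: Ts; [left | right]. Qed.

Lemma step_consistent_edge (X Y : Type) (T : teacher X Y) x xh yh
    (c : dfftree X Y (feature X)) :
  step_consistent T (Some x, (xh, yh), node_y c, node_f c) -> node_y c <> Some yh ->
  node_y c = Some (T.1 x) /\ T.2 x xh = node_f c.
Proof. by case=> _ [[<-] [cy cf]] cy_yh; split; last exact: cf. Qed.

Lemma dff_ok_child_label (X Y F : Type) (H : X * Y -> Prop) E p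
    (c : dfftree X Y F) :
  dff_ok H E (Some p) c -> node_y c <> Some p.2.
Proof.
case: p => xh yh ok_c; inversion ok_c as [? ? ? ? ? ? _ label _ _]; subst.
by case: label.
Qed.

Section Adversary.

Variables (X : Type) (L R M : nat) (Phi : feature X -> Prop) (x0 : X).

Local Notation Y := 'I_L.+1.
Local Notation tree := (dfftree X Y (feature X)).

Definition origin_history (p : X * Y) : Prop := p = (x0, ord0).

Definition component_assignment (S : 'I_R -> seq (feature X)) (q : 'I_R -> Y)
    (T : teacher X Y) (Sx : X -> seq (feature X)) : Prop :=
  (forall x, T.1 x <> ord0 ->
     exists j, Sx x = S j /\ sat (S j) x /\ q j = T.1 x) /\
  (forall x xh, T.1 x <> T.1 xh ->
     (T.1 xh <> ord0 ->
        exists phi, T.2 x xh = Some phi /\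
          (Phi phi /\ phi x = true) /\
          (exists phi', List.In phi' (Sx xh) /\ phi = negf phi')) /\
     (T.1 xh = ord0 ->
        exists phi, T.2 x xh = Some phi /\
          List.In phi (Sx x) /\
          (exists phi', (Phi phi' /\ phi' xh = true) /\ phi = negf phi'))).

Lemma feature_negates_component S q T Sx x xh :
  component_assignment S q T Sx -> T.1 xh <> ord0 -> T.1 x <> T.1 xh ->
  exists phi, T.2 x xh = Some (negf phi) /\ List.In phi (Sx xh) /\ phi x = false.
Proof.
move=> [_ cut] xh_nz x_xh.
have [phi [-> [[_ phi_x] [phi' [phi'_in phi_eq]]]]] := (cut x xh x_xh).1 xh_nz.
subst phi; exists phi'; split=> //; split=> //.
by move: phi_x; rewrite /negf; case: (phi' x).
Qed.

Lemma feature_in_component S q T Sx x xh :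
  component_assignment S q T Sx -> T.1 xh = ord0 -> T.1 x <> ord0 ->
  exists phi, T.2 x xh = Some phi /\ List.In phi (Sx x).
Proof.
move=> [_ cut] xh0 x_nz.
have x_xh : T.1 x <> T.1 xh by rewrite xh0.
by have [phi [? [? _]]] := (cut x xh x_xh).2 xh0; exists phi.
Qed.

Definition prototype := (X * Y * seq (feature X))%type.

Definition no_prototype : prototype := (x0, ord0, [::]).

Definition learned (st : seq prototype) : nat :=
  sumn [seq size p.2 | p <- st].

Definition prototype_in (T : teacher X Y) (S : 'I_R -> seq (feature X))
    (Sx : X -> seq (feature X)) (p : prototype) (j : 'I_R) : Prop :=
  [/\ T.1 p.1.1 = p.1.2, p.1.2 <> ord0, Sx p.1.1 = S j,
      List.NoDup p.2 & List.incl p.2 (S j)].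

Definition prototypes_ok (T : teacher X Y) (S : 'I_R -> seq (feature X))
    (Sx : X -> seq (feature X)) (st : seq prototype) : Prop :=
  exists js : seq 'I_R, [/\ size js = size st, uniq js &
    forall k j0, k < size st ->
      prototype_in T S Sx (nth no_prototype st k) (nth j0 js k)].

Lemma prototypes_ok_nth T S Sx st i :
  prototypes_ok T S Sx st -> i < size st ->
  exists j, prototype_in T S Sx (nth no_prototype st i) j.
Proof.
case=> js [size_js _ js_ok] lt_i.
have : i < size js by rewrite size_js.
by case: js {size_js} js_ok => // j0 js js_ok _; exists (nth j0 (j0 :: js) i); apply: js_ok.
Qed.

Lemma learned_le T S (q : 'I_R -> Y) Sx st :
  in_Lset Phi M S q -> prototypes_ok T S Sx st -> learned st <= R * M.
Proof.
move=> [S_small _] [js [size_js uniq_js js_ok]].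
have size_st : size st <= R.
  by rewrite -size_js -[leqRHS]size_enum_ord uniq_leq_size // => j; rewrite mem_enum.
apply: leq_trans (leq_mul size_st (leqnn M)).
apply: sumn_map_le; apply/(all_nthP no_prototype) => k lt_k.
have [j0 _] : exists j : 'I_R, true by exists (Ordinal (leq_trans lt_k size_st)).
have [_ _ _ nodup incl] := js_ok k j0 lt_k.
rewrite size_length; apply: leq_trans (S_small (nth j0 js k)).1.
by rewrite size_length; apply/leP; apply: List.NoDup_incl_length nodup incl.
Qed.

Lemma learned_refine st i p phi :
  i < size st -> nth no_prototype st i = p ->
  learned (set_nth no_prototype st i (p.1, p.2 ++ [:: phi])) = (learned st).+1.
Proof.
move=> lt_i st_i.
have := sumn_map_set_nth (fun p : prototype => size p.2) no_prototype
  (p.1, p.2 ++ [:: phi]) lt_i.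
by rewrite /learned st_i size_cat addn1 addnS -addSn => /addIn.
Qed.

Lemma prototypes_ok_refine T S Sx st i p phi x :
  prototypes_ok T S Sx st -> i < size st -> nth no_prototype st i = p ->
  sat p.2 x -> List.In phi (Sx p.1.1) -> phi x = false ->
  prototypes_ok T S Sx (set_nth no_prototype st i (p.1, p.2 ++ [:: phi])).
Proof.
move=> [js [size_js uniq_js js_ok]] lt_i st_i px phi_in phi_x.
exists js; rewrite size_set_nth (maxn_idPr lt_i); split=> // k j0 lt_k.
rewrite nth_set_nth /=; case: eqP => [-> | _]; last exact: js_ok.
have := js_ok i j0 lt_i; rewrite st_i => -[Tp p_nz Sxp nodup incl].
split=> //.
- apply: List.NoDup_app => //; first by constructor=> //; constructor.
  by move=> a /(proj1 (satP _ _) px) ax [a_phi | //]; move: ax; rewrite -a_phi phi_x.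
- by apply: List.incl_app => // a [<- | //]; rewrite -Sxp.
Qed.

Lemma prototypes_ok_rcons T S Sx st x j phi :
  prototypes_ok T S Sx st -> ~~ has (fun p : prototype => sat p.2 x) st ->
  T.1 x <> ord0 -> Sx x = S j -> sat (S j) x -> List.In phi (S j) ->
  prototypes_ok T S Sx (rcons st (x, T.1 x, [:: phi])).
Proof.
move=> [js [size_js uniq_js js_ok]] fresh x_nz Sxj xSj phi_in.
exists (rcons js j); rewrite !size_rcons size_js; split=> //.
- rewrite rcons_uniq uniq_js andbT; apply/negP => j_in.
  have lt_k : index j js < size st by rewrite -size_js index_mem.
  have [_ _ _ _ incl] := js_ok _ j lt_k; rewrite nth_index // in incl.
  case/negP: fresh; apply/(has_nthP no_prototype); exists (index j js) => //.
  exact: sat_incl incl xSj.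
- move=> k j0; rewrite ltnS !nth_rcons size_js.
  case: (ltngtP k (size st)) => [lt_k _ | // | _ _]; first exact: js_ok.
  by split=> //; [constructor=> //; constructor | move=> a [<- | //]].
Qed.

(* The [None] branches never occur on a path consistent with a teacher of the
   class; they only make the updates total. *)
Definition refine (st : seq prototype) i (p : prototype) (c : tree) :=
  if node_f c is Some phi
  then set_nth no_prototype st i (p.1, p.2 ++ [:: negf phi]) else st.

Definition open_prototype (st : seq prototype) (x : X) (c : tree) :=
  if node_y c is Some y then
    if node_f c is Some phi then rcons st (x, y, [:: phi]) else st
  else st.

Definition examples_in (E : seq (X * Y)) (st : seq prototype) : Prop :=
  forall k, k < size st -> List.In (nth no_prototype st k).1 E.

Lemma examples_in_refine E E' st i p c :
  examples_in E st -> i < size st -> nth no_prototype st i = p ->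
  examples_in (E ++ E') (refine st i p c).
Proof.
move=> Est lt_i st_i k; rewrite /refine.
case: (node_f c) => [phi|] lt_k; apply: List.in_or_app; left; last exact: Est.
move: lt_k; rewrite size_set_nth (maxn_idPr lt_i) nth_set_nth /= => lt_k.
case: eqP => [k_i | _]; last exact: Est.
by rewrite -st_i -k_i; exact: Est.
Qed.

Lemma examples_in_open E st x c :
  examples_in E st ->
  examples_in (E ++ new_example (Some x) c) (open_prototype st x c).
Proof.
move=> Est k; rewrite /open_prototype /new_example.
case: (node_y c) => [y|]; last by move=> lt_k; apply: List.in_or_app; left; exact: Est.
case: (node_f c) => [phi|]; last by move=> lt_k; apply: List.in_or_app; left; exact: Est.
rewrite size_rcons nth_rcons ltnS.
case: (ltngtP k (size st)) => [lt_k _ | // | _ _]; apply: List.in_or_app.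
  by left; exact: Est.
by right; left.
Qed.

Definition bounded_path (st : seq prototype) (s : seq (step X Y (feature X))) :=
  forall T S q Sx, in_Lset Phi M S q -> component_assignment S q T Sx ->
    T.1 x0 = ord0 -> path_consistent T s -> prototypes_ok T S Sx st ->
    size s + learned st <= R * M.

Lemma bounded_path_nil st : bounded_path st [::].
Proof. by move=> T S q Sx SqL _ _ _ proto_ok; exact: learned_le SqL proto_ok. Qed.

Lemma bounded_path_refine st i p x c s :
  i < size st -> nth no_prototype st i = p -> sat p.2 x ->
  node_y c <> Some p.1.2 -> bounded_path (refine st i p c) s ->
  bounded_path st ((Some x, p.1, node_y c, node_f c) :: s).
Proof.
move=> lt_i st_i px c_lbl bounded T S q Sx SqL Sx_ok Tx0.
move=> /path_consistent_cons[step_ok path_ok] proto_ok.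
case: p st_i px c_lbl step_ok bounded => [[xi yi] C] st_i px c_lbl step_ok bounded.
have [cy cf] := step_consistent_edge step_ok c_lbl.
have [j] := prototypes_ok_nth proto_ok lt_i; rewrite st_i => -[/= Txi yi_nz _ _ _].
have x_xi : T.1 x <> T.1 xi by rewrite Txi => Txy; apply: c_lbl; rewrite cy Txy.
have xi_nz : T.1 xi <> ord0 by rewrite Txi.
have [phi [Tphi [phi_in phi_x]]] := feature_negates_component Sx_ok xi_nz x_xi.
have refined : refine st i (xi, yi, C) c =
    set_nth no_prototype st i ((xi, yi), C ++ [:: phi]).
  by rewrite /refine -cf Tphi negfK.
have := bounded T S q Sx SqL Sx_ok Tx0 path_ok.
rewrite refined (learned_refine _ lt_i st_i) /= addSnnS; apply.
exact: prototypes_ok_refine proto_ok lt_i st_i px phi_in phi_x.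
Qed.

Lemma bounded_path_open st x c s :
  ~~ has (fun p : prototype => sat p.2 x) st -> node_y c <> Some ord0 ->
  bounded_path (open_prototype st x c) s ->
  bounded_path st ((Some x, (x0, ord0), node_y c, node_f c) :: s).
Proof.
move=> fresh c_lbl bounded T S q Sx SqL Sx_ok Tx0.
move=> /path_consistent_cons[step_ok path_ok] proto_ok.
have [cy cf] := step_consistent_edge step_ok c_lbl.
have x_nz : T.1 x <> ord0 by move=> Tx; apply: c_lbl; rewrite cy Tx.
have [phi [Tphi phi_in]] := feature_in_component Sx_ok Tx0 x_nz.
have [j [Sxj [xSj _]]] := Sx_ok.1 x x_nz.
have opened : open_prototype st x c = rcons st (x, T.1 x, [:: phi]).
  by rewrite /open_prototype cy -cf Tphi.
have := bounded T S q Sx SqL Sx_ok Tx0 path_ok.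
rewrite opened /learned map_rcons sumn_rcons /= addn1 addnS -addSn; apply.
have phi_in_Sj : List.In phi (S j) by rewrite -Sxj.
exact: prototypes_ok_rcons proto_ok fresh x_nz Sxj xSj phi_in_Sj.
Qed.

Lemma dff_ok_bounded_path E inc (t : tree) :
  dff_ok origin_history E inc t ->
  forall st, examples_in E st -> exists s, rl_path t s /\ bounded_path st s.
Proof.
elim=> {}E {}inc y f x ch leaf_iff _ edges ok_ch IH st Est.
case: ch leaf_iff edges ok_ch IH => [|[p0 c0] ch] leaf_iff edges ok_ch IH.
  by exists [::]; split; [constructor | exact: bounded_path_nil].
case: x leaf_iff ok_ch IH => [x|] leaf_iff ok_ch IH; last by have := proj1 leaf_iff erefl.
have child p : origin_history p \/ List.In p E ->
    exists c, List.In (p, c) ((p0, c0) :: ch) by apply: (proj2 (edges _ p)).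
case: (boolP (has (fun p : prototype => sat p.2 x) st)) => [matched | fresh].
- set i := find (fun p : prototype => sat p.2 x) st.
  have lt_i : i < size st by rewrite -has_find.
  have [c in_c] := child _ (or_intror (Est i lt_i)).
  have [s [path_s bounded]] :=
    IH _ _ in_c _ (examples_in_refine _ (c := c) Est lt_i erefl).
  exists ((Some x, (nth no_prototype st i).1, node_y c, node_f c) :: s).
  split; first by constructor.
  apply: bounded_path_refine lt_i erefl (nth_find _ matched) _ bounded.
  exact: dff_ok_child_label (ok_ch _ _ in_c).
- have [c in_c] := child _ (or_introl erefl).
  have [s [path_s bounded]] := IH _ _ in_c _ (examples_in_open Est).
  exists ((Some x, (x0, ord0), node_y c, node_f c) :: s).
  split; first by constructor.
  exact: bounded_path_open fresh (dff_ok_child_label (ok_ch _ _ in_c)) bounded.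
Qed.

End Adversary.

Theorem mainTheorem5 (L R M : nat) (X : Type) (Phi : feature X -> Prop)
  (HPhi : forall phi, Phi phi -> Phi (negf phi))
  (x0 : X)
  (Hcons : class_consistent (relaxed_class Phi L R M)
             (fun p => p = (x0, (ord0 : 'I_L.+1)))) :
  forall (t : dfftree X 'I_L.+1 (feature X)) (h : nat),
    shattered (relaxed_class Phi L R M) (fun p => p = (x0, (ord0 : 'I_L.+1))) t ->
    has_height t h ->
    h <= R * M.
Proof.
move=> t h [ok_t [consistent _]] height_t.
have [//|s [path_s bounded]] := dff_ok_bounded_path R M Phi ok_t (st := [::]).
have [T [[S [q [SqL [_ [_ [Sx Sx_ok]]]]]] [T_H path_T]]] := consistent s path_s.
rewrite -(height_t s path_s) -[size s]addn0.
apply: bounded SqL Sx_ok (T_H _ _ erefl) path_T _.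
by exists [::].
Qed.
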